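(* Let $\mathbb{F}$ be any field and let $G=([n],E)$ be a simple undirected graph. Let $\mathcal{A}_G\le\Lambda(n,\mathbb{F})$ be the alternating matrix space spanned by the matrices $A_{i,j}$ with $\{i,j\}\in E$. Then: (1) for every $s\in\mathbb{N}$, $G$ has an independent set of size $s$ if and only if $\mathcal{A}_G$ has an isotropic space of dimension $s$; in particular $\alpha(G)=\alpha(\mathcal{A}_G)$; (2) for every $c\in\mathbb{N}$, $G$ has a vertex $c$-coloring (a partition of $[n]$ into $c$ independent sets) if and only if $\mathcal{A}_G$ has an isotropic $c$-decomposition; in particular $\chi(G)=\chi(\mathcal{A}_G)$.
   Context: $\Lambda(n,\mathbb{F})$ is the space of $n\times n$ alternating matrices over $\mathbb{F}$ (matrices $A$ with $v^tAv=0$ for all $v\in\mathbb{F}^n$). An alternating matrix space is a linear subspace $\mathcal{A}\le\Lambda(n,\mathbb{F})$. For $i<j$, $A_{i,j}$ is the $n\times n$ matrix with $(i,j)$ entry $1$, $(j,i)$ entry $-1$, all other entries $0$. A subspace $U\le\mathbb{F}^n$ is an isotropic space of $\mathcal{A}$ if $u^tAu'=0$ for all $u,u'\in U$ and all $A\in\mathcal{A}$. An isotropic $c$-decomposition of $\mathcal{A}$ is a direct sum decomposition $\mathbb{F}^n=U_1\oplus\cdots\oplus U_c$ into $c$ nonzero subspaces each of which is an isotropic space of $\mathcal{A}$. $\alpha(\mathcal{A})$ is the maximum dimension of an isotropic space of $\mathcal{A}$, and $\chi(\mathcal{A})$ is the minimum $c$ such that $\mathcal{A}$ admits an isotropic $c$-decomposition.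 $\alpha(G)$ and $\chi(G)$ are the independence number and chromatic number of $G$. *)

From HB Require Import structures.
From mathcomp Require Import all_boot all_order all_algebra.
Set Implicit Arguments. Unset Strict Implicit. Unset Printing Implicit Defensive.
Import GRing.Theory.
Local Open Scope ring_scope.

Definition simple_graph (n : nat) (e : rel 'I_n) : Prop :=
  symmetric e /\ irreflexive e.

Definition independent (n : nat) (e : rel 'I_n) (S : {set 'I_n}) : Prop :=
  forall i j, i \in S -> j \in S -> ~~ e i j.

Definition vertex_coloring (n : nat) (e : rel 'I_n) (c : nat) : Prop :=
  exists P : {set {set 'I_n}},
    [/\ partition P [set: 'I_n], #|P| = c & forall S, S \in P -> independent e S].

Definition alt_mx (F : fieldType) (n : nat) (i j : 'I_n) : 'M[F]_n :=
  delta_mx i j - delta_mx j i.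

(* A_G: the matrix space spanned by A_{i,j}, i<j, {i,j} in E, encoded
   (via mxvec) as the row space of an n^2 x n^2 matrix. A matrix A lies in
   A_G iff (mxvec A <= AG)%MS. *)
Definition AG (F : fieldType) (n : nat) (e : rel 'I_n) : 'M[F]_(n ^ 2) :=
  (\sum_(p : 'I_n * 'I_n | (p.1 < p.2)%N && e p.1 p.2)
      <<mxvec (alt_mx F p.1 p.2)>>)%MS.

(* U (row space of U, a subspace of F^n as row vectors) is an isotropic space
   of the alternating matrix space encoded by M. *)
Definition isotropic (F : fieldType) (n : nat) (M : 'M[F]_(n ^ 2))
  (U : 'M[F]_n) : Prop :=
  forall (u v : 'rV[F]_n) (A : 'M[F]_n),
    (u <= U)%MS -> (v <= U)%MS -> (mxvec A <= M)%MS -> u *m A *m v^T = 0.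

Definition isotropic_decomposition (F : fieldType) (n : nat)
  (M : 'M[F]_(n ^ 2)) (c : nat) : Prop :=
  exists Us : 'I_c -> 'M[F]_n,
    [/\ (\sum_(i < c) Us i :=: 1%:M)%MS,
        mxdirect (\sum_(i < c) Us i)%MS,
        forall i, Us i != 0
      & forall i, isotropic M (Us i)].

From HB Require Import structures.
From mathcomp Require Import all_boot all_order all_algebra.
From mathcomp Require Import zify.
Set Implicit Arguments. Unset Strict Implicit. Unset Printing Implicit Defensive.
Import GRing.Theory.
Local Open Scope ring_scope.

(* By bilinearity, U is isotropic for A_G iff for every edge {i,j} and all
   u, v in U the minor u_i v_j - u_j v_i vanishes (isotropic_AG_edges). Hence
   the coordinate subspace F^S (coord_proj S) is isotropic when S is
   independent: this gives the easy directions, independent set => isotropic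
   space of the same dimension and colouring => isotropic decomposition.

   Conversely, if U projects ONTO the coordinate space F^J, then for i, j in J
   some u, v in U restrict on J to the unit vectors e_i, e_j, and their (i,j)
   minor is 1; so J is independent (onto_independent). The combinatorial core
   is a transversal theorem (direct_sum_transversal): if U_1, ..., U_c span
   F^n with total dimension at most n, the coordinates can be coloured by 'I_c
   so that each U_k projects isomorphically onto the coordinates of colour k.
   It is proved by induction on a set of coordinates, eliminating one
   coordinate against a pivot vector (coordinate_assignment). Applied to
   U (+) U^C it yields an independent set of size dim U; applied to an
   isotropic decomposition it yields a colouring. *)

Section CoordinateSubspaces.
Variables (F : fieldType) (n : nat).

Local Notation unit_row j := (delta_mx (0 : 'I_1) j : 'rV[F]_n).

Definition coord_rows (J : {set 'I_n}) : 'M[F]_(#|J|, n) :=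
  \matrix_(r, j) (j == enum_val r)%:R.

(* The diagonal projection onto the coordinate subspace F^J; its row space is
   the set of vectors supported in J. *)
Definition coord_proj (J : {set 'I_n}) : 'M[F]_n :=
  (coord_rows J)^T *m coord_rows J.

Lemma coord_projE (J : {set 'I_n}) i j : coord_proj J i j = ((i == j) && (i \in J))%:R.
Proof.
rewrite /coord_proj mxE.
have [iJ | iNJ] := boolP (i \in J); last first.
  rewrite andbF big1 // => r _; rewrite !mxE.
  case: eqP => [ei | _]; last by rewrite mul0r.
  by rewrite ei enum_valP in iNJ.
rewrite andbT (bigD1 (enum_rank_in iJ i)) //= big1 ?addr0.
  by rewrite !mxE enum_rankK_in // eqxx mul1r eq_sym.
move=> r /negbTE rNi; rewrite !mxE.
case: (i =P enum_val r) => [ei | _]; last by rewrite mul0r.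
by rewrite -(enum_valK_in iJ r) -ei eqxx in rNi.
Qed.

Lemma mul_coord_proj (J : {set 'I_n}) (x : 'rV[F]_n) j :
  (x *m coord_proj J) 0 j = x 0 j * (j \in J)%:R.
Proof.
rewrite mxE (bigD1 j) //= big1 ?addr0; first by rewrite coord_projE eqxx.
by move=> i /negbTE iNj; rewrite coord_projE iNj mulr0.
Qed.

Lemma coord_proj_id (J : {set 'I_n}) (x : 'rV[F]_n) :
  (forall j, j \notin J -> x 0 j = 0) -> x *m coord_proj J = x.
Proof.
move=> x0; apply/rowP => j; rewrite mul_coord_proj.
by have [jJ | /x0->] := boolP (j \in J); rewrite ?mulr1 ?mul0r.
Qed.

Lemma sub_coord_projP (J : {set 'I_n}) (x : 'rV[F]_n) :
  (x <= coord_proj J)%MS <-> (forall j, j \notin J -> x 0 j = 0).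
Proof.
split=> [/submxP[y ->] j /negbTE jNJ | /coord_proj_id <-]; last exact: submxMl.
by rewrite mul_coord_proj jNJ mulr0.
Qed.

Lemma unit_row_sub_proj (J : {set 'I_n}) j : j \in J -> (unit_row j <= coord_proj J)%MS.
Proof.
move=> jJ; apply/sub_coord_projP => i iNJ; rewrite mxE eqxx /=.
by case: (i =P j) => // ij; rewrite ij jJ in iNJ.
Qed.

Lemma card_le_rank (S : {set 'I_n}) m (V : 'M[F]_(m, n)) :
  (forall j, j \in S -> (unit_row j <= V)%MS) -> (#|S| <= \rank V)%N.
Proof.
move=> eV; have sub : (coord_rows S <= V)%MS.
  apply/row_subP => r; have -> : row r (coord_rows S) = unit_row (enum_val r).
    by apply/rowP => j; rewrite !mxE eqxx.
  exact/eV/enum_valP.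
have orth : coord_rows S *m (coord_rows S)^T = 1%:M.
  apply/matrixP => r s; rewrite !mxE (bigD1 (enum_val r)) //= big1 ?addr0.
    by rewrite !mxE eqxx mul1r (inj_eq enum_val_inj) eq_sym.
  by move=> j /negbTE jNr; rewrite !mxE jNr mul0r.
rewrite -{1}(mxrank1 F #|S|) -orth.
exact: leq_trans (mxrankM_maxl _ _) (mxrankS sub).
Qed.

Lemma rank_coord_proj (J : {set 'I_n}) : \rank (coord_proj J) = #|J|.
Proof.
apply/eqP; rewrite eqn_leq (leq_trans (mxrankM_maxl _ _) (rank_leq_col _)).
exact/card_le_rank/unit_row_sub_proj.
Qed.

End CoordinateSubspaces.

Lemma rank_mul_injP (F : fieldType) m n p (A : 'M[F]_(m, n)) (B : 'M[F]_(n, p)) :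
  \rank (A *m B) = \rank A <->
  (forall x : 'rV[F]_n, (x <= A)%MS -> x *m B = 0 -> x = 0).
Proof.
have rank_split := mxrank_mul_ker A B; split=> [rkAB x xA xB | injB].
  have /eqP : \rank (A :&: kermx B) = 0%N by lia.
  rewrite mxrank_eq0 => /eqP ker0; apply/eqP; rewrite -submx0 -ker0.
  by rewrite sub_capmx xA sub_kermx xB eqxx.
suff : \rank (A :&: kermx B) = 0%N by lia.
apply/eqP; rewrite mxrank_eq0 -submx0; apply/row_subP => r; rewrite submx0.
apply/eqP/injB; first exact: submx_trans (row_sub r _) (capmxSl _ _).
by apply/sub_kermxP; exact: submx_trans (row_sub r _) (capmxSr _ _).
Qed.

Lemma sum_eq_each (I : finType) (P : pred I) (f g : I -> nat) :
  (forall i, P i -> f i <= g i)%N ->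
  (\sum_(i | P i) g i <= \sum_(i | P i) f i)%N -> forall i, P i -> f i = g i.
Proof.
move=> fg sum_gf; have [_] := leqif_sum (fun i Pi => leqif_eq (fg i Pi)).
have -> : (\sum_(i | P i) f i == \sum_(i | P i) g i)%N.
  by rewrite eqn_leq sum_gf leq_sum.
by move=> /esym/forall_inP eq_fg i /eq_fg/eqP.
Qed.

Lemma sum_drop_one (I : finType) (f g : I -> nat) (m : I) N :
    (forall i, f i <= g i)%N -> (f m < g m)%N ->
    (\sum_i g i <= N.+1)%N -> (N <= \sum_i f i)%N ->
  (\sum_i f i <= N)%N /\ forall i, i != m -> f i = g i.
Proof.
move=> fg fgm sum_g sum_f.
have split_m (h : I -> nat) : (\sum_i h i = h m + \sum_(i | i != m) h i)%N.
  exact: bigD1.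
have eq_off_m : forall i, i != m -> f i = g i.
  apply: (@sum_eq_each _ (fun i => i != m)) => [i _ | ]; first exact: fg.
  by move: sum_g sum_f fgm; rewrite !split_m; lia.
split=> //; rewrite split_m (eq_bigr _ eq_off_m) -ltnS (leq_trans _ sum_g) //.
by rewrite split_m -addSn leq_add2r.
Qed.

Section Transversal.
Variables (F : fieldType) (n : nat).

Local Notation unit_row j := (delta_mx (0 : 'I_1) j : 'rV[F]_n).

Lemma card_le_sum_rank c (K : {set 'I_n}) (U : 'I_c -> 'M[F]_n) :
  (forall j, j \in K -> (unit_row j <= \sum_k U k)%MS) ->
  (#|K| <= \sum_k \rank (U k))%N.
Proof. by move=> /card_le_rank/leq_trans; apply; exact: mxrank_sum_leqif. Qed.

(* Writing e_a as a sum of vectors of the U k, some summand v_ m is nonzero at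
   coordinate a: it is the pivot used to eliminate coordinate a from U m. *)
Lemma exists_pivot c (U : 'I_c -> 'M[F]_n) a :
  (unit_row a <= \sum_k U k)%MS ->
  exists v_ : 'I_c -> 'rV[F]_n, exists m : 'I_c,
    [/\ forall k, (v_ k <= U k)%MS, \sum_k v_ k = unit_row a & v_ m 0 a != 0].
Proof.
case/sub_sumsmxP => u_ ea; exists (fun k => u_ k *m U k).
have [m vm | v0] := pickP (fun k => (u_ k *m U k) 0 a != 0).
  by exists m; split=> // k; exact: submxMl.
have := congr1 (fun x : 'rV[F]_n => x 0 a) ea; rewrite summxE big1 /=.
  by rewrite mxE !eqxx => /eqP; rewrite oner_eq0.
by move=> k _; apply/eqP/negbFE/v0.
Qed.

Definition shrink c (U : 'I_c -> 'M[F]_n) (m : 'I_c) (a : 'I_n) (k : 'I_c) :=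
  if k == m then (U m :&: coord_proj F [set~ a])%MS
  else U k *m coord_proj F [set~ a].

(* The shrunk spaces still span the projection of the original sum: subtract
   from the m-th summand the multiple of the pivot that kills coordinate a. *)
Lemma shrink_span c (U : 'I_c -> 'M[F]_n) (v_ : 'I_c -> 'rV[F]_n) m a (y : 'rV[F]_n) :
    (forall k, v_ k <= U k)%MS -> \sum_k v_ k = unit_row a -> v_ m 0 a != 0 ->
  (y <= \sum_k U k)%MS -> (y *m coord_proj F [set~ a] <= \sum_k shrink U m a k)%MS.
Proof.
move=> vU ea vma /sub_sumsmxP[w_ ->]; set P := coord_proj F [set~ a].
set t := (w_ m *m U m) 0 a / v_ m 0 a.
have eaP : unit_row a *m P = 0.
  apply/rowP => j; rewrite mul_coord_proj !inE !mxE eqxx /=.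
  by case: (j == a); rewrite ?mulr0 ?mul0r.
have -> : (\sum_k w_ k *m U k) *m P = \sum_k (w_ k *m U k - t *: v_ k) *m P.
  by rewrite -mulmx_suml sumrB -scaler_sumr ea mulmxBl -scalemxAl eaP scaler0 subr0.
have zU k : (w_ k *m U k - t *: v_ k <= U k)%MS.
  by rewrite addmx_sub ?submxMl // -scaleNr scalemx_sub.
apply: summx_sub => k _; apply: (sumsmx_sup k) => //; rewrite /shrink.
case: eqP => [-> | _]; last exact/submxMr/zU.
set z := _ - _; have za : z 0 a = 0 by rewrite /z /t !mxE divfK ?subrr.
have zP : z *m P = z by apply: coord_proj_id => j; rewrite !inE negbK => /eqP ->.
by rewrite zP sub_capmx zU -zP submxMl.
Qed.

Lemma rank_shrink_le c (U : 'I_c -> 'M[F]_n) m a k :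
  (\rank (shrink U m a k) <= \rank (U k))%N.
Proof.
rewrite /shrink; case: eqP => [-> | _]; last exact: mxrankM_maxl.
exact/mxrankS/capmxSl.
Qed.

Lemma rank_shrink_pivot c (U : 'I_c -> 'M[F]_n) m a (v : 'rV[F]_n) :
  (v <= U m)%MS -> v 0 a != 0 -> (\rank (shrink U m a m) < \rank (U m))%N.
Proof.
move=> vU va; rewrite /shrink eqxx; apply: rank_ltmx; rewrite ltmxE capmxSl /=.
apply: contra va => /(submx_trans vU)/submx_trans/(_ (capmxSr _ _)).
by move/sub_coord_projP/(_ a); rewrite !inE eqxx => ->.
Qed.

(* Induction on #|K|:
   give the pivot coordinate a the colour m of its pivot; the total dimension
   count forces the projections of the other U k to stay injective. *)
Lemma coordinate_assignment c (K : {set 'I_n}) (U : 'I_c -> 'M[F]_n) :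
    (forall j, j \in K -> (unit_row j <= \sum_k U k)%MS) ->
    (\sum_k \rank (U k) <= #|K|)%N ->
  exists2 col : 'I_n -> nat, (forall j, j \in K -> col j < c)%N &
    forall k (x : 'rV[F]_n), (x <= U k)%MS ->
      (forall j, j \in K -> col j = k -> x 0 j = 0) -> x = 0.
Proof.
have [N] := ubnP #|K|; elim: N K U => // N IH K U ltKN spanK rankU.
have [K0 | [a aK]] := set_0Vmem K.
  exists (fun=> 0%N) => [j | k x xU _]; first by rewrite K0 inE.
  move: rankU; rewrite K0 cards0 leqn0 sum_nat_eq0 => /forallP/(_ k)/eqP.
  by move/eqP; rewrite mxrank_eq0 => /eqP U0; apply/eqP; rewrite -submx0 -U0.
have [v_ [m [vU ea vma]]] := exists_pivot (spanK a aK).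
set P := coord_proj F [set~ a]; set U' := shrink U m a; set K' := K :\ a.
have cardK : #|K| = #|K'|.+1 by rewrite (cardsD1 a K) aK.
have spanK' j : j \in K' -> (unit_row j <= \sum_k U' k)%MS.
  rewrite !inE => /andP[ja jK].
  have <- : unit_row j *m P = unit_row j.
    apply: coord_proj_id => i; rewrite !inE negbK mxE => /eqP->.
    by rewrite eqxx eq_sym (negbTE ja).
  exact: shrink_span vU ea vma (spanK j jK).
have rankU1 : (\sum_k \rank (U k) <= #|K'|.+1)%N by rewrite -cardK.
have [rankU' rank_eq] := sum_drop_one (rank_shrink_le U m a)
  (rank_shrink_pivot (vU m) vma) rankU1 (card_le_sum_rank spanK').
have ltK'N : (#|K'| < N)%N by move: ltKN; rewrite cardK.
have [col' col'_lt col'_inj] := IH K' U' ltK'N spanK' rankU'.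
exists (fun j => if j == a then val m else col' j) => [j jK | k x xU x0].
  by case: eqP => [_ | /eqP ja]; [exact: ltn_ord | apply: col'_lt; rewrite !inE ja].
have x0' j : j \in K' -> col' j = k -> x 0 j = 0.
  by rewrite !inE => /andP[ja jK] colj; move: (x0 j jK); rewrite (negbTE ja) => ->.
have [km | km] := eqVneq k m.
  (* a vector of U m vanishing at the pivot coordinate lies in the shrunk U m *)
  rewrite {}km in xU x0 x0'; apply: (col'_inj m) x0'.
  rewrite /U' /shrink eqxx sub_capmx xU; apply/sub_coord_projP => j.
  by rewrite !inE negbK => /eqP ->; move: (x0 a aK); rewrite eqxx => ->.
(* otherwise projecting away the pivot coordinate is injective on U k *)
have rank_Pk : \rank (U k *m P) = \rank (U k).
  by rewrite -(rank_eq k km) /U' /shrink (negbTE km).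
apply: (proj1 (rank_mul_injP (U k) P) rank_Pk x xU).
apply: (col'_inj k); first by rewrite /U' /shrink (negbTE km) submxMr.
by move=> j jK' colj; rewrite mul_coord_proj (x0' j jK' colj) mul0r.
Qed.

Lemma direct_sum_transversal c (U : 'I_c -> 'M[F]_n) :
    (forall j, (unit_row j <= \sum_k U k)%MS) ->
    (\sum_k \rank (U k) <= n)%N ->
  exists col : 'I_n -> 'I_c, forall k, let J := [set j | col j == k] in
    #|J| = \rank (U k) /\ (coord_proj F J <= U k *m coord_proj F J)%MS.
Proof.
move=> span rankU.
have [|col0 col0_lt col0_inj] := @coordinate_assignment c setT U (fun j _ => span j).
  by rewrite cardsT card_ord.
pose col j := Ordinal (col0_lt j (in_setT j)).
pose J k := [set j | col j == k]; pose P k := coord_proj F (J k).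
have rank_UP k : \rank (U k *m P k) = \rank (U k).
  apply/rank_mul_injP => x xU xP; apply: (col0_inj k x xU) => j _ colj.
  move/rowP/(_ j): xP; rewrite mul_coord_proj mxE inE -val_eqE /= colj eqxx.
  by rewrite mulr1.
have rank_le k : (\rank (U k) <= #|J k|)%N.
  by rewrite -rank_UP -(rank_coord_proj F (J k)) mxrankM_maxr.
have sumJ : (\sum_k #|J k|)%N = n.
  rewrite -[RHS]card_ord -sum1_card (partition_big col xpredT) //=.
  by apply: eq_bigr => k _; rewrite -sum1_card; apply: eq_bigl => j; rewrite inE.
have rank_eq k : \rank (U k) = #|J k|.
  apply: (@sum_eq_each _ xpredT _ _ (fun i _ => rank_le i)) => //.
  by rewrite sumJ -[n in (n <= _)%N]card_ord -cardsT; exact: card_le_sum_rank.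
exists col => k; split; first by rewrite rank_eq.
by rewrite -(mxrank_leqif_sup (submxMl (U k) (P k))).2 rank_UP rank_coord_proj rank_eq.
Qed.

End Transversal.

Section Isotropy.
Variables (F : fieldType) (n : nat).

Lemma alt_form (u v : 'rV[F]_n) i j :
  u *m alt_mx F i j *m v^T = (u 0 i * v 0 j - u 0 j * v 0 i)%:M.
Proof.
have row_delta (w : 'rV[F]_n) k l : w *m delta_mx k l = w 0 k *: delta_mx 0 l.
  apply/rowP => r; rewrite !mxE (bigD1 k) //= big1 ?addr0; first by rewrite !mxE !eqxx.
  by move=> k' /negbTE k'k; rewrite !mxE k'k mulr0.
have delta_dot (w : 'rV[F]_n) l : delta_mx 0 l *m w^T = (w 0 l)%:M.
  apply/matrixP => r s; rewrite !ord1 !mxE (bigD1 l) //= big1 ?addr0.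
    by rewrite !mxE !eqxx mul1r.
  by move=> k /negbTE kl; rewrite !mxE kl mul0r.
rewrite /alt_mx mulmxBr mulmxBl !row_delta -!scalemxAl !delta_dot.
by rewrite !scale_scalar_mx raddfB.
Qed.

Lemma isotropic_AGP (e : rel 'I_n) (U : 'M[F]_n) :
  isotropic (AG F e) U <->
  (forall u v : 'rV[F]_n, (u <= U)%MS -> (v <= U)%MS ->
     forall i j : 'I_n, (i < j)%N -> e i j -> u *m alt_mx F i j *m v^T = 0).
Proof.
split=> [iso u v uU vU i j ltij eij | alt0 u v A uU vU AG_A].
  apply: iso uU vU _; rewrite /AG (sumsmx_sup (i, j)) ?genmxE //=.
  by rewrite ltij eij.
pose phi := mulmxr v^T \o mulmx u \o @vec_mx F n n.
suff /(submx_trans AG_A)/sub_kermxP : (AG F e <= kermx (lin1_mx phi))%MS.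
  by rewrite mul_rV_lin1 /= mxvecK.
apply/sumsmx_subP => p /andP[ltp ep]; rewrite genmxE; apply/sub_kermxP.
by rewrite mul_rV_lin1 /= mxvecK alt0.
Qed.


Lemma isotropic_AG_edges (e : rel 'I_n) (U : 'M[F]_n) : symmetric e ->
  isotropic (AG F e) U <->
  (forall u v : 'rV[F]_n, (u <= U)%MS -> (v <= U)%MS ->
     forall i j, e i j -> u 0 i * v 0 j = u 0 j * v 0 i).
Proof.
move=> sym_e; rewrite isotropic_AGP.
split=> [alt0 u v uU vU i j eij | minor0 u v uU vU i j _ eij]; last first.
  by rewrite alt_form minor0 // subrr raddf0.
have minor0 (k l : 'I_n) : (k < l)%N -> e k l -> u 0 k * v 0 l = u 0 l * v 0 k.
  move=> ltkl ekl; apply/eqP; rewrite -subr_eq0.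
  move: (alt0 u v uU vU k l ltkl ekl); rewrite alt_form.
  by move/matrixP/(_ 0 0); rewrite !mxE eqxx mulr1n => ->.
case: (ltngtP i j) => [ltij | ltji | /val_inj eq_ij]; first exact: minor0.
  by rewrite (minor0 j i ltji) // sym_e.
by rewrite eq_ij.
Qed.

End Isotropy.

Section GraphInvariants.
Variables (F : fieldType) (n : nat) (e : rel 'I_n).
Hypothesis e_simple : simple_graph e.

Local Notation unit_row j := (delta_mx (0 : 'I_1) j : 'rV[F]_n).

Lemma independent_isotropic (S : {set 'I_n}) :
  independent e S -> isotropic (AG F e) (coord_proj F S).
Proof.
move=> indS; apply/(isotropic_AG_edges _ (proj1 e_simple)).
move=> u v /sub_coord_projP u0 /sub_coord_projP v0 i j eij.
have [iS | iNS] := boolP (i \in S); last by rewrite (u0 i) ?(v0 i) ?mul0r ?mulr0.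
have [jS | jNS] := boolP (j \in S); last by rewrite (u0 j) ?(v0 j) ?mul0r ?mulr0.
by have := indS i j iS jS; rewrite eij.
Qed.

(* If an isotropic U projects onto F^J, then J is independent: vectors of U
   restricting to e_i and e_j on J have minor 1 at the edge {i,j}. *)
Lemma onto_independent (U : 'M[F]_n) (J : {set 'I_n}) :
    isotropic (AG F e) U -> (coord_proj F J <= U *m coord_proj F J)%MS ->
  independent e J.
Proof.
move=> isoU onto i j iJ jJ; apply/negP => eij.
have dual k : k \in J ->
    exists2 u : 'rV[F]_n, (u <= U)%MS & forall l, l \in J -> u 0 l = (l == k)%:R.
  move=> kJ; have /submxP[w ew] := submx_trans (unit_row_sub_proj F kJ) onto.
  exists (w *m U) => [|l lJ]; first exact: submxMl.
  move/rowP/(_ l): ew; rewrite mulmxA mul_coord_proj lJ mulr1 mxE eqxx /=.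
  by move=> <-.
have ij : i != j by apply: contraTneq eij => ->; rewrite (proj2 e_simple).
have [u uU u_i] := dual i iJ; have [v vU v_j] := dual j jJ.
have := (isotropic_AG_edges U (proj1 e_simple)).1 isoU u v uU vU i j eij.
rewrite u_i // u_i // v_j // v_j // (negbTE ij) eq_sym (negbTE ij) !eqxx /=.
by rewrite mulr1n mulr0n mul1r mulr0 => /eqP; rewrite oner_eq0.
Qed.

(* An isotropic space of dimension s yields an independent set of size s,
   via the transversal theorem for U (+) U^C. *)
Lemma isotropic_independent (U : 'M[F]_n) :
  isotropic (AG F e) U -> exists S, independent e S /\ #|S| = \rank U.
Proof.
move=> isoU; pose V (k : 'I_2) := if k == 0 then U else (U^C)%MS.
have span j : (unit_row j <= \sum_k V k)%MS.
  by rewrite big_ord_recl big_ord1 /V /=; exact/submx_full/addsmx_compl_full.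
have rankV : (\sum_k \rank (V k) <= n)%N.
  by rewrite big_ord_recl big_ord1 /V /= mxrank_compl subnKC ?rank_leq_col.
have [col /(_ 0) [cardJ onto]] := direct_sum_transversal span rankV.
by exists [set j | col j == 0]; split; [exact: onto_independent isoU onto | ].
Qed.

Lemma coloring_decomposition c :
  vertex_coloring e c -> isotropic_decomposition (AG F e) c.
Proof.
move=> [P [partP <- indP]].
have span j : (unit_row j <= \sum_(i < #|P|) coord_proj F (enum_val i))%MS.
  have : j \in cover P by rewrite (cover_partition partP) inE.
  case/bigcupP => B BP jB; apply: (sumsmx_sup (enum_rank_in BP B)) => //.
  by rewrite enum_rankK_in // unit_row_sub_proj.
exists (fun i => coord_proj F (enum_val i)); split.
- apply/eqmxP; rewrite submx1; apply/row_subP => j.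
  by rewrite row1; exact: span.
- rewrite mxdirectEgeq /= (eq_bigr (fun i : 'I_#|P| => #|(enum_val i : {set 'I_n})|)); last first.
    by move=> i _; exact: rank_coord_proj.
  rewrite -(big_enum_val (fun B : {set 'I_n} => #|B|)) -(card_partition partP).
  exact: card_le_rank (fun j _ => span j).
- by move=> i; rewrite -mxrank_eq0 rank_coord_proj cards_eq0 (partition_neq0 partP) ?enum_valP.
- by move=> i; apply/independent_isotropic/indP/enum_valP.
Qed.

Lemma decomposition_coloring c :
  isotropic_decomposition (AG F e) c -> vertex_coloring e c.
Proof.
move=> [Us [sumU directU nzU isoU]].
have span j : (unit_row j <= \sum_k Us k)%MS by rewrite sumU submx1.
have rankU : (\sum_k \rank (Us k) <= n)%N.
  by move: directU; rewrite mxdirectE /= => /eqP <-; rewrite sumU mxrank1.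
have [col colJ] := direct_sum_transversal span rankU.
pose J k := [set j | col j == k].
have J_nz k : J k != set0.
  by have [cardJ _] := colJ k; rewrite -cards_eq0 cardJ mxrank_eq0 nzU.
have J_inj : injective J.
  move=> k l eqJ; have /set0Pn[j jk] := J_nz k.
  have jl : j \in J l by rewrite -eqJ.
  by move: jk jl; rewrite !inE => /eqP <- /eqP.
exists [set J k | k : 'I_c]; split.
- apply/and3P; split.
  + apply/eqP/setP => j; rewrite cover_imset inE; apply/bigcupP.
    by exists (col j); rewrite ?inE.
  + apply/trivIsetP => _ _ /imsetP[k _ ->] /imsetP[l _ ->] neqJ.
    rewrite -setI_eq0; apply/set0Pn => -[j]; rewrite !inE => /andP[/eqP-> /eqP kl].
    by rewrite kl eqxx in neqJ.
  + by apply/imsetP => -[k _ J0]; move: (J_nz k); rewrite -J0 eqxx.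
- by rewrite card_imset // card_ord.
- by move=> _ /imsetP[k _ ->]; have [_ onto] := colJ k; exact: onto_independent (isoU k) onto.
Qed.

End GraphInvariants.

Theorem theorem1p4 (F : fieldType) (n : nat) (e : rel 'I_n) :
  simple_graph e ->
  (forall s : nat,
     (exists S : {set 'I_n}, independent e S /\ #|S| = s) <->
     (exists U : 'M[F]_n, isotropic (AG F e) U /\ \rank U = s)) /\
  (forall c : nat,
     vertex_coloring e c <-> isotropic_decomposition (AG F e) c).
Proof.
move=> e_simple; split=> [s | c]; split.
- case=> S [indS <-]; exists (coord_proj F S).
  by rewrite rank_coord_proj; split=> //; exact: independent_isotropic.
- by case=> U [isoU <-]; exact: isotropic_independent.
- exact: coloring_decomposition.
- exact: decomposition_coloring.
Qed.
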